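(* Let $X$ be an $L$-topological space and let $Y$ be an $L$-sober space. The following are equivalent: (1) $Y$ is an $L$-sobrification of $X$; (2) there exists a quasihomeomorphism $j:X\to Y$; (3) $(\mathcal O(X),{\rm sub}_X)$ and $(\mathcal O(Y),{\rm sub}_Y)$ are $L$-order-isomorphic.
   Context: $L$ is a frame with implication $\to$. $L$-subsets of $X$ are maps $X\to L$; $a_X$ the constant with value $a$; ${\rm sub}_X(A,B)=\bigwedge_xA(x)\to B(x)$; $f^\leftarrow(B)=B\circ f$. An $L$-topology on $X$ is $\mathcal O(X)\subseteq L^X$ closed under finite meets and arbitrary joins containing all constants $a_X$; a map $f$ is continuous if $f^\leftarrow(B)\in\mathcal O(X)$ for all $B\in\mathcal O(Y)$. A point of $\mathcal O(X)$ is $p:\mathcal O(X)\to L$ with $p(A\wedge B)=p(A)\wedge p(B)$, $p(\bigvee_iA_i)=\bigvee_ip(A_i)$, $p(\lambda_X)=\lambda$; $[x](A)=A(x)$; $X$ is $L$-sober if $x\mapsto[x]$ is a bijection from $X$ onto the set of points. An $L$-sobrification of $X$ is an $L$-sober space $Y$ with a continuous $j:X\to Y$ such that for every $L$-sober $Z$ and continuous $f:X\to Z$ there is a unique continuous $\bar f:Y\to Z$ with $\bar f\circ j=f$. A map $f:X\to Y$ is a quasihomeomorphism if $f^\leftarrow:\mathcal O(Y)\to\mathcal O(X)$, $B\mapsto B\circ f$, is a well-defined bijection. An $L$-order-isomorphism between $(\mathcal O(X),{\rm sub}_X)$ and $(\mathcal O(Y),{\rm sub}_Y)$ is a bijection $g$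 with ${\rm sub}_Y(g(A),g(B))={\rm sub}_X(A,B)$. *)

Set Implicit Arguments.
Unset Strict Implicit.

(* A frame with implication = complete Heyting algebra:
   complete lattice (arbitrary sups) with binary meets and a Heyting
   implication right adjoint to meet. *)
Record frame := Frame {
  fcar :> Type;
  fle : fcar -> fcar -> Prop;
  fmeet : fcar -> fcar -> fcar;
  fsup : (fcar -> Prop) -> fcar;
  fimp : fcar -> fcar -> fcar;
  fle_refl : forall a, fle a a;
  fle_trans : forall a b c, fle a b -> fle b c -> fle a c;
  fle_antisym : forall a b, fle a b -> fle b a -> a = b;
  fmeet_glb : forall a b c, fle c (fmeet a b) <-> (fle c a /\ fle c b);
  fsup_lub : forall (S : fcar -> Prop) c, fle (fsup S) c <-> (forall a, S a -> fle a c);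
  fimp_adj : forall a b c, fle c (fimp a b) <-> fle (fmeet c a) b
}.

Section Defs.
Variable L : frame.

Definition fjoin (I : Type) (f : I -> L) : L := fsup (fun a => exists i, a = f i).
Definition finf (S : L -> Prop) : L := fsup (fun c => forall a, S a -> fle c a).

Definition cst (X : Type) (a : L) : X -> L := fun _ => a.
Arguments cst X a : clear implicits.

Definition subX (X : Type) (A B : X -> L) : L :=
  finf (fun c => exists x, c = fimp (A x) (B x)).

Definition preim (X Y : Type) (f : X -> Y) (B : Y -> L) : X -> L := fun x => B (f x).

Definition is_Ltopology (X : Type) (O : (X -> L) -> Prop) : Prop :=
  (forall A B, O A -> O B -> O (fun x => fmeet (A x) (B x))) /\
  (forall (I : Type) (A : I -> X -> L), (forall i, O (A i)) ->
       O (fun x => fjoin (fun i => A i x))) /\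
  (forall a : L, O (cst X a)).

Record LTop := mkLTop {
  lpt :> Type;
  lopen : (lpt -> L) -> Prop;
  lopen_ax : is_Ltopology lopen
}.

Definition Lcontinuous (X Y : LTop) (f : X -> Y) : Prop :=
  forall B, lopen B -> lopen (preim f B).

(* points of O(X): maps O(X) -> L, represented by p : (X -> L) -> L whose
   behaviour on opens is what matters *)
Definition is_point (X : LTop) (p : (X -> L) -> L) : Prop :=
  (forall A B, lopen A -> lopen B ->
      p (fun x => fmeet (A x) (B x)) = fmeet (p A) (p B)) /\
  (forall (I : Type) (A : I -> X -> L), (forall i, lopen (A i)) ->
      p (fun x => fjoin (fun i => A i x)) = fjoin (fun i => p (A i))) /\
  (forall a : L, p (cst X a) = a).

Definition pt_of (X : LTop) (x : X) : (X -> L) -> L := fun A => A x.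

(* L-sober: x |-> [x] is a bijection onto the points (maps on O(X),
   hence compared on open L-subsets) *)
Definition Lsober (X : LTop) : Prop :=
  (forall x y : X, (forall A, lopen A -> pt_of x A = pt_of y A) -> x = y) /\
  (forall p, is_point p -> exists x : X, forall A, lopen A -> p A = pt_of x A).

Definition Lsobrification (X Y : LTop) : Prop :=
  Lsober Y /\
  exists j : X -> Y, Lcontinuous j /\
    forall (Z : LTop) (f : X -> Z), Lsober Z -> Lcontinuous f ->
      exists g : Y -> Z, Lcontinuous g /\ (forall x, g (j x) = f x) /\
        (forall g' : Y -> Z, Lcontinuous g' -> (forall x, g' (j x) = f x) ->
           forall y, g' y = g y).

Definition quasihomeo (X Y : LTop) (f : X -> Y) : Prop :=
  (forall B, lopen B -> lopen (preim f B)) /\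
  (forall B B', lopen B -> lopen B' -> preim f B = preim f B' -> B = B') /\
  (forall A, lopen A -> exists B, lopen B /\ preim f B = A).

Definition Lorder_iso (X Y : LTop) (g : (X -> L) -> (Y -> L)) : Prop :=
  (forall A, lopen A -> lopen (g A)) /\
  (forall A A', lopen A -> lopen A' -> g A = g A' -> A = A') /\
  (forall B, lopen B -> exists A, lopen A /\ g A = B) /\
  (forall A B, lopen A -> lopen B -> subX (g A) (g B) = subX A B).

End Defs.

From Stdlib Require Import ClassicalEpsilon FunctionalExtensionality ProofIrrelevance.
Set Implicit Arguments.
Unset Strict Implicit.

(* For a quasihomeomorphism j, the bijection j^<- : O(Y) -> O(X) preserves sub, so its
   inverse is an L-order-isomorphism. Conversely an L-order-isomorphism of L-topologies
   preserves finite meets, arbitrary joins and, because sub(a_X, C) = a -> sub(1_X, C), the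
   constants; so composing its inverse with evaluation at x gives a point of O(Y), which
   sobriety of Y realises as [j x], and this j is a quasihomeomorphism. A quasihomeomorphism
   into a sober space has the universal property of the sobrification, since continuous maps
   into a sober space Z are determined by, and can be rebuilt from, their action on opens.
   Conversely, the space of points of O(X) is an L-sober space receiving X by a
   quasihomeomorphism, and any sobrification Y of X is homeomorphic to it over X. *)

Section FrameFacts.
Variable L : frame.

Lemma fsup_ub (S : L -> Prop) a : S a -> fle a (fsup S).
Proof. intro Sa. exact (proj1 (fsup_lub S (fsup S)) (fle_refl _) a Sa). Qed.

Lemma fle_meet_l (a b : L) : fle (fmeet a b) a.
Proof. exact (proj1 (proj1 (fmeet_glb a b _) (fle_refl _))). Qed.

Lemma fle_meet_r (a b : L) : fle (fmeet a b) b.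
Proof. exact (proj2 (proj1 (fmeet_glb a b _) (fle_refl _))). Qed.

Lemma fle_meet (a b c : L) : fle c a -> fle c b -> fle c (fmeet a b).
Proof. intros Ha Hb. apply fmeet_glb. split; assumption. Qed.

Lemma fjoin_ub (I : Type) (f : I -> L) i : fle (f i) (fjoin f).
Proof. apply fsup_ub. exists i. reflexivity. Qed.

Lemma fjoin_lub (I : Type) (f : I -> L) c : (forall i, fle (f i) c) -> fle (fjoin f) c.
Proof. intro H. apply fsup_lub. intros a [i ->]. apply H. Qed.

Lemma finf_glb (S : L -> Prop) c : fle c (finf S) <-> (forall a, S a -> fle c a).
Proof.
  split.
  - intros H a Sa. apply (fle_trans H). apply fsup_lub. intros b Hb. exact (Hb a Sa).
  - intro H. apply fsup_ub. exact H.
Qed.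

Lemma fle_lb_eq (a b : L) : (forall c, fle c a <-> fle c b) -> a = b.
Proof. intro H. apply fle_antisym; apply H, fle_refl. Qed.

Definition ftop : L := fsup (fun _ => True).
Definition fbot : L := fsup (fun _ => False).

Lemma fle_top (a : L) : fle a ftop.
Proof. apply fsup_ub. exact I. Qed.

Lemma fmeet_top (a : L) : fmeet a ftop = a.
Proof. apply fle_antisym; [apply fle_meet_l | apply fle_meet; [apply fle_refl | apply fle_top]]. Qed.

Lemma ftop_meet (a : L) : fmeet ftop a = a.
Proof. apply fle_antisym; [apply fle_meet_r | apply fle_meet; [apply fle_top | apply fle_refl]]. Qed.

Definition leF (X : Type) (A B : X -> L) : Prop := forall x, fle (A x) (B x).

Lemma leF_antisym (X : Type) (A B : X -> L) : leF A B -> leF B A -> A = B.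
Proof. intros HAB HBA. extensionality x. apply fle_antisym; auto. Qed.

Lemma subX_glb (X : Type) (A B : X -> L) c :
  fle c (subX A B) <-> forall x, fle (fmeet c (A x)) (B x).
Proof.
  unfold subX. rewrite finf_glb. split.
  - intros H x. apply fimp_adj, H. exists x. reflexivity.
  - intros H a [x ->]. apply fimp_adj, H.
Qed.

Lemma leF_subX (X : Type) (A B : X -> L) : leF A B <-> fle ftop (subX A B).
Proof.
  rewrite subX_glb. unfold leF. split; intros H x; specialize (H x);
    rewrite ?ftop_meet in *; exact H.
Qed.

Lemma subX_cst_l (X : Type) (a : L) (C : X -> L) :
  subX (cst a) C = fimp a (subX (cst ftop) C).
Proof.
  apply fle_lb_eq. intro c. rewrite fimp_adj, !subX_glb. unfold cst.
  split; intros H x; specialize (H x); rewrite ?fmeet_top in *; exact H.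
Qed.

End FrameFacts.

Arguments ftop {L}.
Arguments fbot {L}.

Section Opens.
Variables (L : frame) (X : LTop L).

Lemma open_meet (A B : X -> L) : lopen A -> lopen B -> lopen (fun x => fmeet (A x) (B x)).
Proof. apply (proj1 (lopen_ax X)). Qed.

Lemma open_join (I : Type) (A : I -> X -> L) :
  (forall i, lopen (A i)) -> lopen (fun x => fjoin (fun i => A i x)).
Proof. apply (proj1 (proj2 (lopen_ax X))). Qed.

Lemma open_cst (a : L) : lopen (@cst L X a).
Proof. apply (proj2 (proj2 (lopen_ax X))). Qed.

Lemma pt_of_point (x : X) : is_point (pt_of x).
Proof. split; [|split]; reflexivity. Qed.

End Opens.

Lemma right_inverse_on (T U : Type) (P : T -> Prop) (Q : U -> Prop) (f : T -> U) (t0 : T) :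
  (forall u, Q u -> exists t, P t /\ f t = u) ->
  exists g : U -> T, forall u, Q u -> P (g u) /\ f (g u) = u.
Proof.
  intro onto.
  assert (H : forall u, exists t, Q u -> P t /\ f t = u).
  { intro u. destruct (classic (Q u)) as [Qu|nQu].
    - destruct (onto u Qu) as [t Ht]. exists t. intros _. exact Ht.
    - exists t0. intro Qu. contradiction. }
  destruct (choice _ H) as [g Hg]. exists g. exact Hg.
Qed.

Section OrderIsomorphism.
Variables (L : frame) (X Y : LTop L) (h : (X -> L) -> (Y -> L)).
Hypothesis hh : Lorder_iso h.

Let h_open : forall A, lopen A -> lopen (h A) := proj1 hh.
Let h_inj : forall A A', lopen A -> lopen A' -> h A = h A' -> A = A' := proj1 (proj2 hh).
Let h_onto : forall B, lopen B -> exists A, lopen A /\ h A = B := proj1 (proj2 (proj2 hh)).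
Let h_subX : forall A A', lopen A -> lopen A' -> subX (h A) (h A') = subX A A' :=
  proj2 (proj2 (proj2 hh)).

Lemma Lorder_iso_leF A A' : lopen A -> lopen A' -> (leF (h A) (h A') <-> leF A A').
Proof. intros HA HA'. rewrite !leF_subX, h_subX by assumption. reflexivity. Qed.

Lemma Lorder_iso_meet A A' : lopen A -> lopen A' ->
  h (fun x => fmeet (A x) (A' x)) = (fun y => fmeet (h A y) (h A' y)).
Proof.
  intros HA HA'.
  assert (HM : lopen (fun x => fmeet (A x) (A' x))) by (apply open_meet; assumption).
  destruct (h_onto (B := fun y => fmeet (h A y) (h A' y))) as [D [HD ED]].
  { apply open_meet; apply h_open; assumption. }
  rewrite <- ED. apply leF_antisym.
  - rewrite ED. intro y. apply fle_meet.
    + apply (Lorder_iso_leF HM HA). intro x. apply fle_meet_l.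
    + apply (Lorder_iso_leF HM HA'). intro x. apply fle_meet_r.
  - apply (Lorder_iso_leF HD HM). intro x. apply fle_meet.
    + apply (Lorder_iso_leF HD HA). rewrite ED. intro y. apply fle_meet_l.
    + apply (Lorder_iso_leF HD HA'). rewrite ED. intro y. apply fle_meet_r.
Qed.

Lemma Lorder_iso_join (I : Type) (A : I -> X -> L) : (forall i, lopen (A i)) ->
  h (fun x => fjoin (fun i => A i x)) = (fun y => fjoin (fun i => h (A i) y)).
Proof.
  intro HA.
  assert (HJ : lopen (fun x => fjoin (fun i => A i x))) by (apply open_join; exact HA).
  destruct (h_onto (B := fun y => fjoin (fun i => h (A i) y))) as [D [HD ED]].
  { apply open_join. intro i. apply h_open, HA. }
  rewrite <- ED. apply leF_antisym.
  - apply (Lorder_iso_leF HJ HD). intro x. apply fjoin_lub. intro i.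
    apply (Lorder_iso_leF (HA i) HD). rewrite ED. intro y.
    apply (fjoin_ub (fun i => h (A i) y)).
  - rewrite ED. intro y. apply fjoin_lub. intro i.
    apply (Lorder_iso_leF (HA i) HJ). intro x. apply (fjoin_ub (fun i => A i x)).
Qed.

Lemma Lorder_iso_top : h (cst ftop) = cst ftop.
Proof.
  destruct (h_onto (open_cst Y ftop)) as [D [HD ED]].
  apply leF_antisym; [intro y; apply fle_top |].
  rewrite <- ED. apply (Lorder_iso_leF HD (open_cst X ftop)). intro x. apply fle_top.
Qed.

(* An order-isomorphism alone need not fix the constants; preserving the L-valued sub does. *)
Lemma Lorder_iso_cst a : h (cst a) = cst a.
Proof.
  assert (Hsub : forall B, lopen B -> subX (h (cst a)) (h B) = subX (cst a) (h B)).
  { intros B HB.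
    rewrite h_subX, (subX_cst_l a B), (subX_cst_l a (h B)), <- Lorder_iso_top, h_subX
      by (auto using open_cst).
    reflexivity. }
  destruct (h_onto (open_cst Y a)) as [D [HD ED]].
  apply leF_antisym; apply leF_subX.
  - rewrite <- ED, Hsub, ED by exact HD. apply leF_subX. intro y. apply fle_refl.
  - rewrite <- Hsub by apply open_cst. apply leF_subX. intro y. apply fle_refl.
Qed.

Lemma Lorder_iso_point y : is_point (fun A => h A y).
Proof.
  split; [|split]; cbv beta.
  - intros A A' HA HA'. rewrite (Lorder_iso_meet HA HA'). reflexivity.
  - intros I A HA. rewrite (Lorder_iso_join HA). reflexivity.
  - intro a. rewrite Lorder_iso_cst. reflexivity.
Qed.

Lemma Lorder_iso_inv :
  exists g : (Y -> L) -> (X -> L), Lorder_iso g /\ forall B, lopen B -> h (g B) = B.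
Proof.
  destruct (right_inverse_on (cst ftop) h_onto) as [g Hg].
  exists g. split; [|intros B HB; apply Hg, HB].
  split; [|split; [|split]].
  - intros B HB. apply Hg, HB.
  - intros B B' HB HB' E. rewrite <- (proj2 (Hg B HB)), <- (proj2 (Hg B' HB')), E.
    reflexivity.
  - intros A HA. exists (h A). split; [apply h_open, HA|].
    apply h_inj; [apply Hg, h_open, HA | exact HA | apply Hg, h_open, HA].
  - intros B B' HB HB'. rewrite <- h_subX by (apply Hg; assumption).
    rewrite (proj2 (Hg B HB)), (proj2 (Hg B' HB')). reflexivity.
Qed.

Lemma Lorder_iso_eq_on (h' : (X -> L) -> (Y -> L)) :
  (forall A, lopen A -> h' A = h A) -> Lorder_iso h'.
Proof.
  intro E. split; [|split; [|split]].
  - intros A HA. rewrite E by exact HA. apply h_open, HA.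
  - intros A A' HA HA'. rewrite !E by assumption. apply h_inj; assumption.
  - intros B HB. destruct (h_onto HB) as [A [HA <-]]. exists A. split; [exact HA | apply E, HA].
  - intros A A' HA HA'. rewrite !E by assumption. apply h_subX; assumption.
Qed.

End OrderIsomorphism.

Section Quasihomeomorphism.
Variables (L : frame) (X Y : LTop L) (j : X -> Y).

Lemma quasihomeo_subX B B' : quasihomeo j -> lopen B -> lopen B' ->
  subX (preim j B) (preim j B') = subX B B'.
Proof.
  intros [_ [hinj _]] HB HB'.
  apply fle_lb_eq. intro c. rewrite !subX_glb. split; [|intros H x; apply H].
  intros H y.
  (* c /\ B /\ B' and c /\ B are opens of Y with the same preimage under j. *)
  assert (E : (fun y => fmeet (fmeet c (B y)) (B' y)) = (fun y => fmeet c (B y))).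
  { apply hinj.
    - apply open_meet; [apply open_meet; [apply (open_cst Y c) | exact HB] | exact HB'].
    - apply open_meet; [apply (open_cst Y c) | exact HB].
    - extensionality x. apply fle_antisym; [apply fle_meet_l|].
      apply fle_meet; [apply fle_refl | apply (H x)]. }
  rewrite <- (equal_f E y). apply fle_meet_r.
Qed.

Lemma quasihomeo_iff_Lorder_iso : quasihomeo j <-> Lorder_iso (preim j).
Proof.
  split.
  - intro hj. destruct hj as [hc [hinj honto]].
    split; [exact hc | split; [exact hinj | split; [exact honto|]]].
    intros B B' HB HB'. apply quasihomeo_subX; [split; [|split]|..]; assumption.
  - intros [hc [hinj [honto _]]]. split; [exact hc | split; assumption].
Qed.

End Quasihomeomorphism.

Section Sobriety.
Variable L : frame.

Lemma is_point_preim (X Z : LTop L) (f : X -> Z) (p : (X -> L) -> L) :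
  Lcontinuous f -> is_point p -> is_point (fun C => p (preim f C)).
Proof.
  intros hf [pm [pj pc]]. split; [|split].
  - intros C C' HC HC'. exact (pm _ _ (hf C HC) (hf C' HC')).
  - intros I C HC. exact (pj I (fun i => preim f (C i)) (fun i => hf _ (HC i))).
  - intro a. exact (pc a).
Qed.

Lemma Lsober_preim_repr (X Y : LTop L) (phi : (Y -> L) -> (X -> L)) :
  Lsober Y -> (forall x, is_point (fun B => phi B x)) ->
  exists j : X -> Y, forall B, lopen B -> preim j B = phi B.
Proof.
  intros [_ hpts] hphi.
  assert (H : forall x, exists y : Y, forall B, lopen B -> B y = phi B x).
  { intro x. destruct (hpts _ (hphi x)) as [y Hy]. exists y. intros B HB.
    symmetry. exact (Hy B HB). }
  destruct (choice _ H) as [j Hj]. exists j. intros B HB.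
  extensionality x. apply Hj, HB.
Qed.

Lemma Lorder_iso_of_quasihomeo (X Y : LTop L) (j : X -> Y) :
  quasihomeo j -> exists g : (X -> L) -> (Y -> L), Lorder_iso g.
Proof.
  intro hj. apply quasihomeo_iff_Lorder_iso in hj.
  destruct (Lorder_iso_inv hj) as [g [hg _]]. exists g. exact hg.
Qed.

Lemma quasihomeo_of_Lorder_iso (X Y : LTop L) (g : (X -> L) -> (Y -> L)) :
  Lsober Y -> Lorder_iso g -> exists j : X -> Y, quasihomeo j.
Proof.
  intros hY hg. destruct (Lorder_iso_inv hg) as [h [hh _]].
  destruct (Lsober_preim_repr hY (Lorder_iso_point hh)) as [j hj].
  exists j. apply quasihomeo_iff_Lorder_iso. exact (Lorder_iso_eq_on hh hj).
Qed.

Lemma quasihomeo_ext_unique (X Y Z : LTop L) (j : X -> Y) (g g' : Y -> Z) :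
  quasihomeo j -> Lsober Z -> Lcontinuous g -> Lcontinuous g' ->
  (forall x, g (j x) = g' (j x)) -> forall y, g y = g' y.
Proof.
  intros [_ [hinj _]] [hZ _] hg hg' E y. apply hZ. intros C HC.
  assert (EC : preim g C = preim g' C).
  { apply hinj; [apply hg, HC | apply hg', HC |].
    extensionality x. unfold preim. rewrite E. reflexivity. }
  exact (equal_f EC y).
Qed.

Lemma quasihomeo_ext_exists (X Y Z : LTop L) (j : X -> Y) (f : X -> Z) :
  quasihomeo j -> Lsober Z -> Lcontinuous f ->
  exists g : Y -> Z, Lcontinuous g /\ forall x, g (j x) = f x.
Proof.
  intros hj hZ hf. apply quasihomeo_iff_Lorder_iso in hj.
  destruct (Lorder_iso_inv hj) as [h [hh hjh]].
  destruct (Lsober_preim_repr (phi := fun C y => h (preim f C) y) hZ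
              (fun y => is_point_preim hf (Lorder_iso_point hh y))) as [g hg].
  exists g. split.
  - intros C HC. rewrite hg by exact HC. apply (proj1 hh), hf, HC.
  - intro x. apply (proj1 hZ). intros C HC.
    change (preim j (preim g C) x = preim f C x).
    rewrite hg, hjh by auto. reflexivity.
Qed.

Lemma quasihomeo_Lsobrification (X Y : LTop L) (j : X -> Y) :
  Lsober Y -> quasihomeo j -> Lsobrification X Y.
Proof.
  intros hY hj. split; [exact hY|]. exists j. split; [exact (proj1 hj)|].
  intros Z f hZ hf. destruct (quasihomeo_ext_exists hj hZ hf) as [g [hg Eg]].
  exists g. split; [exact hg | split; [exact Eg|]].
  intros g' hg' Eg'. apply (quasihomeo_ext_unique hj hZ hg' hg).
  intro x. rewrite Eg, Eg'. reflexivity.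
Qed.

End Sobriety.

Section PointSpace.
Variables (L : frame) (X : LTop L).

(* Points only matter on O(X); pinning them to bottom elsewhere makes equal points equal. *)
Definition normal_point (p : (X -> L) -> L) : Prop :=
  is_point p /\ forall A, ~ lopen A -> p A = fbot.

Definition restrict_open (p : (X -> L) -> L) (A : X -> L) : L :=
  if excluded_middle_informative (lopen A) then p A else fbot.

Lemma restrict_open_open p A : lopen A -> restrict_open p A = p A.
Proof.
  intro HA. unfold restrict_open.
  destruct (excluded_middle_informative (lopen A)); [reflexivity | contradiction].
Qed.

Lemma restrict_open_normal p : is_point p -> normal_point (restrict_open p).
Proof.
  intros [pm [pj pc]]. split; [split; [|split]|].
  - intros A B HA HB. rewrite !restrict_open_open by (try apply open_meet; assumption).
    apply pm; assumption.
  - intros I A HA. rewrite restrict_open_open by (apply open_join; exact HA).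
    rewrite pj by exact HA. f_equal. extensionality i. symmetry.
    apply restrict_open_open, HA.
  - intro a. rewrite restrict_open_open by apply open_cst. apply pc.
  - intros A HA. unfold restrict_open.
    destruct (excluded_middle_informative (lopen A)); [contradiction | reflexivity].
Qed.

Definition Lpoints : Type := {p : (X -> L) -> L | normal_point p}.

Definition eval_open (A : X -> L) : Lpoints -> L := fun p => proj1_sig p A.

Definition Lpoints_open (U : Lpoints -> L) : Prop := exists A, lopen A /\ U = eval_open A.

Lemma Lpoints_open_eval A : lopen A -> Lpoints_open (eval_open A).
Proof. intro HA. exists A. split; [exact HA | reflexivity]. Qed.

Lemma eval_open_meet A B : lopen A -> lopen B ->
  eval_open (fun x => fmeet (A x) (B x)) = (fun p => fmeet (eval_open A p) (eval_open B p)).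
Proof.
  intros HA HB. extensionality p. exact (proj1 (proj1 (proj2_sig p)) A B HA HB).
Qed.

Lemma eval_open_join (I : Type) (A : I -> X -> L) : (forall i, lopen (A i)) ->
  eval_open (fun x => fjoin (fun i => A i x)) = (fun p => fjoin (fun i => eval_open (A i) p)).
Proof.
  intro HA. extensionality p. exact (proj1 (proj2 (proj1 (proj2_sig p))) I A HA).
Qed.

Lemma eval_open_cst a : eval_open (cst a) = cst a.
Proof. extensionality p. exact (proj2 (proj2 (proj1 (proj2_sig p))) a). Qed.

Lemma Lpoints_topology : is_Ltopology Lpoints_open.
Proof.
  split; [|split].
  - intros U V [A [HA ->]] [B [HB ->]]. exists (fun x => fmeet (A x) (B x)).
    split; [apply open_meet; assumption | symmetry; apply eval_open_meet; assumption].
  - intros I U HU. destruct (choice _ HU) as [A HA].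
    replace U with (fun i => eval_open (A i)) by (extensionality i; symmetry; apply HA).
    exists (fun x => fjoin (fun i => A i x)).
    split; [apply open_join; intro i; apply HA | symmetry; apply eval_open_join, HA].
  - intro a. exists (cst a). split; [apply open_cst | symmetry; apply eval_open_cst].
Qed.

Definition LpointsT : LTop L := mkLTop Lpoints_topology.

Lemma LpointsT_sober : Lsober LpointsT.
Proof.
  split.
  - intros [p Hp] [q Hq] H.
    assert (E : p = q).
    { extensionality A. destruct (classic (lopen A)) as [HA|HA].
      - exact (H (eval_open A) (Lpoints_open_eval HA)).
      - rewrite (proj2 Hp A HA), (proj2 Hq A HA). reflexivity. }
    subst q. f_equal. apply proof_irrelevance.
  - intros P [Pm [Pj Pc]].
    assert (Hp : is_point (fun A => P (eval_open A))).
    { split; [|split].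
      - intros A B HA HB. rewrite eval_open_meet by assumption.
        apply Pm; apply Lpoints_open_eval; assumption.
      - intros I A HA. rewrite eval_open_join by exact HA.
        apply (Pj I (fun i => eval_open (A i))). intro i. apply Lpoints_open_eval, HA.
      - intro a. rewrite eval_open_cst. apply Pc. }
    exists (exist _ _ (restrict_open_normal Hp)). intros U [A [HA ->]].
    unfold pt_of, eval_open at 2; simpl. symmetry. apply restrict_open_open, HA.
Qed.

Definition point_emb (x : X) : LpointsT :=
  exist _ (restrict_open (pt_of x)) (restrict_open_normal (pt_of_point x)).

Lemma preim_point_emb A : lopen A -> preim point_emb (eval_open A) = A.
Proof. intro HA. extensionality x. apply restrict_open_open, HA. Qed.

Lemma point_emb_quasihomeo : quasihomeo point_emb.
Proof.
  split; [|split].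
  - intros U [A [HA ->]]. rewrite preim_point_emb by exact HA. exact HA.
  - intros U U' [A [HA ->]] [B [HB ->]] E. rewrite !preim_point_emb in E by assumption.
    subst. reflexivity.
  - intros A HA. exists (eval_open A). split; [apply Lpoints_open_eval, HA|].
    apply preim_point_emb, HA.
Qed.

End PointSpace.

Lemma Lsobrification_quasihomeo (L : frame) (X Y : LTop L) :
  Lsobrification X Y -> exists j : X -> Y, quasihomeo j.
Proof.
  intros [hY [j [hj hUP]]].
  pose proof (point_emb_quasihomeo X) as hemb.
  destruct (hUP _ _ (LpointsT_sober X) (proj1 hemb)) as [g [hg [gj _]]].
  destruct (quasihomeo_ext_exists hemb hY hj) as [k [hk kemb]].
  assert (kg : forall y, k (g y) = y).
  { intro y. destruct (hUP Y j hY hj) as [m [_ [_ hm]]].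
    rewrite (hm (fun y => k (g y))), (hm (fun y => y)); [reflexivity | ..].
    - intros B HB. exact HB.
    - reflexivity.
    - intros B HB. exact (hg _ (hk _ HB)).
    - intro x. rewrite gj, kemb. reflexivity. }
  exists j. split; [exact hj | split].
  - intros B B' HB HB' E.
    assert (Ek : preim k B = preim k B').
    { apply (proj1 (proj2 hemb)); [apply hk, HB | apply hk, HB' |].
      extensionality x. unfold preim. rewrite !kemb. exact (equal_f E x). }
    extensionality y. rewrite <- (kg y). exact (equal_f Ek (g y)).
  - intros A HA. exists (preim g (eval_open A)). split.
    + apply hg, Lpoints_open_eval, HA.
    + extensionality x. unfold preim. rewrite gj. apply restrict_open_open, HA.
Qed.

Theorem theorem3p9 (L : frame) (X Y : LTop L) (hY : Lsober Y) :
  (Lsobrification X Y <-> exists j : X -> Y, quasihomeo j) /\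
  ((exists j : X -> Y, quasihomeo j) <->
     exists g : (X -> L) -> (Y -> L), Lorder_iso g).
Proof.
  split; split.
  - apply Lsobrification_quasihomeo.
  - intros [j hj]. exact (quasihomeo_Lsobrification hY hj).
  - intros [j hj]. exact (Lorder_iso_of_quasihomeo hj).
  - intros [g hg]. exact (quasihomeo_of_Lorder_iso hY hg).
Qed.
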